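(* If $\mathcal C=\mathrm{code}(\mathcal H,X)\subseteq 2^{[n]}$ is the code of a stable hyperplane arrangement $(\mathcal H,X)$, then $\Gamma(\mathcal C)=\mathrm{nerve}(\{H_i^+\cap X,\ H_i^-\cap X\}_{i\in[n]})$, where the vertex $i$ corresponds to the set $H_i^+\cap X$ and the vertex $\bar i$ to the set $H_i^-\cap X$.
   Context: An oriented affine hyperplane is $H_i=\{x:w_i\cdot x-h_i=0\}$ with $w_i\neq0$, $H_i^+=\{w_i\cdot x-h_i>0\}$, $H_i^-=\{w_i\cdot x-h_i<0\}$. For $\mathcal H=\{H_1,\dots,H_n\}$ and open convex $X\subseteq\mathbb R^d$, the atom of $\sigma$ is $A_\sigma=\bigl(\bigcap_{i\in\sigma}(H_i^+\cap X)\bigr)\setminus\bigcup_{j\notin\sigma}H_j^+$ ($A_\emptyset=X\setminus\bigcup_iH_i^+$), and $\mathrm{code}(\mathcal H,X)=\{\sigma:A_\sigma\ne\emptyset\}$. $(\mathcal H,X)$ is stable if $X$ is open convex and whenever $X\cap\bigcap_{i\in\sigma}H_i\ne\emptyset$, $\dim\bigcap_{i\in\sigma}H_i=d-|\sigma|$. The polar complex $\Gamma(\mathcal C)$ is the simplicial complex on $[n]\sqcup\{\bar1,\dots,\bar n\}$ consisting of all subsets of the sets $\Sigma(\sigma)=\sigma\sqcup\{\bar i:i\in[n]\setminus\sigma\}$, $\sigma\in\mathcal C$. The nerve of a family of sets $\{V_v\}_{v\in V}$ is $\{S\subseteq V:\bigcap_{v\in S}V_v\neq\emptyset\}$. *)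

From HB Require Import structures.
From mathcomp Require Import all_boot all_order all_algebra.
From mathcomp Require Import all_classical all_reals all_analysis.
From mathcomp Require Import matrix_normedtype.
Set Implicit Arguments. Unset Strict Implicit. Unset Printing Implicit Defensive.
Import Order.TTheory GRing.Theory Num.Theory numFieldNormedType.Exports.
Local Open Scope ring_scope.
Local Open Scope classical_set_scope.

Section Arr.
Variables (R : realType) (d n : nat).

(* points of R^d are row vectors 'rV[R]_d, with the canonical (norm) topology *)
Definition vdot (w x : 'rV[R]_d) : R := \sum_(j < d) w ord0 j * x ord0 j.

Definition Hyp (w : 'I_n -> 'rV[R]_d) (h : 'I_n -> R) (i : 'I_n) : set 'rV[R]_d :=
  [set x | vdot (w i) x - h i = 0].
Definition Hpos (w : 'I_n -> 'rV[R]_d) (h : 'I_n -> R) (i : 'I_n) : set 'rV[R]_d :=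
  [set x | vdot (w i) x - h i > 0].
Definition Hneg (w : 'I_n -> 'rV[R]_d) (h : 'I_n -> R) (i : 'I_n) : set 'rV[R]_d :=
  [set x | vdot (w i) x - h i < 0].

Definition convex_set (X : set 'rV[R]_d) : Prop :=
  forall x y (t : R), X x -> X y -> 0 <= t -> t <= 1 -> X ((1 - t) *: x + t *: y).

Definition hatom (w : 'I_n -> 'rV[R]_d) (h : 'I_n -> R) (X : set 'rV[R]_d)
    (sigma : {set 'I_n}) : set 'rV[R]_d :=
  [set x | X x /\ (forall i, i \in sigma -> Hpos w h i x)
               /\ (forall j, j \notin sigma -> ~ Hpos w h j x)].

Definition hcode (w : 'I_n -> 'rV[R]_d) (h : 'I_n -> R) (X : set 'rV[R]_d)
  : {set {set 'I_n}} :=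
  [set sigma | `[< hatom w h X sigma !=set0 >]].

Definition Hcap (w : 'I_n -> 'rV[R]_d) (h : 'I_n -> R) (sigma : {set 'I_n})
  : set 'rV[R]_d := [set x | forall i, i \in sigma -> Hyp w h i x].

(* "dim S = k" for a nonempty affine set S: k is the dimension of its
   direction space {x - y | x, y in S}, i.e. the maximal number of linearly
   independent vectors in it. *)
Definition in_dir (S : set 'rV[R]_d) (v : 'rV[R]_d) : Prop :=
  exists x y, S x /\ S y /\ v = x - y.
Definition affine_dim (S : set 'rV[R]_d) (k : nat) : Prop :=
  (exists M : 'M[R]_(k, d), row_free M /\ forall r, in_dir S (row r M)) /\
  (forall M : 'M[R]_(k.+1, d), (forall r, in_dir S (row r M)) -> ~~ row_free M).

(* stability; "dim = d - |sigma|" is written k + |sigma| = d to avoid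
   truncated subtraction on nat *)
Definition stable_arr (w : 'I_n -> 'rV[R]_d) (h : 'I_n -> R) (X : set 'rV[R]_d) : Prop :=
  open X /\ convex_set X /\
  forall sigma : {set 'I_n}, (X `&` Hcap w h sigma) !=set0 ->
    exists k, affine_dim (Hcap w h sigma) k /\ (k + #|sigma| = d)%N.

(* vertices: inl i = i, inr i = \bar i *)
Definition Sigma (sigma : {set 'I_n}) : {set 'I_n + 'I_n} :=
  (inl @: sigma) :|: (inr @: ~: sigma).

Definition polar_complex (C : {set {set 'I_n}}) : {set {set 'I_n + 'I_n}} :=
  [set S : {set 'I_n + 'I_n} | [exists sigma in C, S \subset Sigma sigma]].

Definition vset (w : 'I_n -> 'rV[R]_d) (h : 'I_n -> R) (X : set 'rV[R]_d)
    (v : 'I_n + 'I_n) : set 'rV[R]_d :=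
  match v with
  | inl i => Hpos w h i `&` X
  | inr i => Hneg w h i `&` X
  end.

(* hnerve; intersections are taken inside the ambient X (only matters for
   the empty face) *)
Definition hnerve (w : 'I_n -> 'rV[R]_d) (h : 'I_n -> R) (X : set 'rV[R]_d)
  : {set {set 'I_n + 'I_n}} :=
  [set S : {set 'I_n + 'I_n} | `[< exists x, X x /\ forall v, v \in S -> vset w h X v x >]].

End Arr.

From HB Require Import structures.
From mathcomp Require Import all_boot all_order all_algebra.
From mathcomp Require Import all_classical all_reals all_analysis.
From mathcomp Require Import matrix_normedtype.
Set Implicit Arguments. Unset Strict Implicit. Unset Printing Implicit Defensive.
Import Order.TTheory GRing.Theory Num.Theory numFieldNormedType.Exports.
Local Open Scope ring_scope.
Local Open Scope classical_set_scope.

(* A witness x of a face S of the nerve lies in the atom of its positive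
   support sigma, and S is contained in Sigma(sigma).  Conversely, a point x
   of the atom A_sigma may still lie on some hyperplanes H_j, j in tau, with
   j not in sigma.  By stability the flat cut out by tau has dimension
   d - |tau|, so the normals w_j (j in tau) are independent and some u has
   w_j . u = -1 for all of them.  A small step from x along u stays in the
   open set X, keeps every strict sign and enters each H_j^-, j in tau: it
   witnesses Sigma(sigma) in the nerve. *)

Lemma cvg_line (R : realType) (V : normedModType R) (x u : V) :
  x + e *: u @[e --> (0 : R)] --> x.
Proof.
rewrite -[in X in _ --> X](addr0 x) -[in X in _ --> _ + X](scale0r u).
by apply: cvgD; [exact: cvg_cst | apply: cvgZr_tmp; exact: cvg_id].
Qed.

Lemma cvg_line_scalar (R : realType) (a c : R) :
  a + e * c @[e --> (0 : R)] --> a.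
Proof. exact: (@cvg_line R^o). Qed.

Section RowVectors.
Variables (R : realType) (d : nat).

Lemma affine_dim_rank_le (S : set 'rV[R]_d) k m (K : 'M[R]_(m, d)) :
  affine_dim S k -> (forall v, (v <= K)%MS -> in_dir S v) -> (\rank K <= k)%N.
Proof.
move=> [_ dimS] KS; rewrite leqNgt; apply/negP => ltkK.
pose M : 'M[R]_(k.+1, d) := pid_mx k.+1 *m row_base K.
apply: (negP (dimS M _)).
- move=> r; apply: KS; rewrite -(eq_row_base K).
  exact: submx_trans (row_sub r M) (submxMl _ _).
- by rewrite /row_free mxrankMfree ?row_base_free // rank_pid_mx.
Qed.

Lemma vdotB (a x y : 'rV[R]_d) : vdot a (x - y) = vdot a x - vdot a y.
Proof. by rewrite /vdot -sumrB; apply: eq_bigr => j _; rewrite !mxE mulrBr. Qed.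

Lemma vdotDZ (a x y : 'rV[R]_d) (e : R) :
  vdot a (x + e *: y) = vdot a x + e * vdot a y.
Proof.
rewrite /vdot mulr_sumr -big_split; apply: eq_bigr => j _ /=.
by rewrite !mxE mulrDr mulrCA.
Qed.

End RowVectors.

Section Arrangement.
Variables (R : realType) (d n : nat) (w : 'I_n -> 'rV[R]_d) (h : 'I_n -> R).

Definition normal_mx (tau : {set 'I_n}) : 'M[R]_(d, #|tau|) :=
  \matrix_(i, j) w (enum_val j) ord0 i.

Lemma mul_normal_mx tau (u : 'rV[R]_d) j :
  (u *m normal_mx tau) ord0 j = vdot (w (enum_val j)) u.
Proof. by rewrite /vdot !mxE; apply: eq_bigr => i _; rewrite mxE mulrC. Qed.

Lemma normal_mx_ker_in_dir tau x : Hcap w h tau x ->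
  forall v, (v <= kermx (normal_mx tau))%MS -> in_dir (Hcap w h tau) v.
Proof.
move=> tau_x v /sub_kermxP vA0; exists x, (x - v); split => //.
split; last by rewrite opprB addrC subrK.
move=> i itau; rewrite /Hyp /= vdotB addrAC (tau_x i itau) add0r.
have := mul_normal_mx v (enum_rank_in itau i).
by rewrite enum_rankK_in // vA0 mxE => <-; rewrite oppr0.
Qed.

Lemma stable_normal_row_full X tau x :
  stable_arr w h X -> X x -> Hcap w h tau x -> row_full (normal_mx tau).
Proof.
move=> [_ [_ st]] Xx tau_x.
have [k [dimH dim_eq]] := st tau (ex_intro _ x (conj Xx tau_x)).
have := affine_dim_rank_le dimH (normal_mx_ker_in_dir tau_x).
rewrite mxrank_ker leq_subLR -{1}dim_eq addnC leq_add2r => le_tau_rank.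
by rewrite /row_full eqn_leq rank_leq_col le_tau_rank.
Qed.

Lemma stable_descent_dir X tau x :
  stable_arr w h X -> X x -> Hcap w h tau x ->
  exists u, forall i, i \in tau -> vdot (w i) u = -1.
Proof.
move=> st Xx tau_x.
have /row_fullP [B BA] := stable_normal_row_full st Xx tau_x.
exists (- const_mx 1 *m B) => i itau.
have := mul_normal_mx (- const_mx 1 *m B) (enum_rank_in itau i).
by rewrite enum_rankK_in // -mulmxA BA mulmx1 !mxE => <-.
Qed.

Lemma hatom_perturb X sigma x :
  stable_arr w h X -> hatom w h X sigma x ->
  exists y, X y /\ (forall i, i \in sigma -> Hpos w h i y) /\
            (forall j, j \notin sigma -> Hneg w h j y).
Proof.
move=> st [Xx [pos_x npos_x]].
pose tau := [set j | (j \notin sigma) && (vdot (w j) x - h j == 0)]%SET.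
have tau_x : Hcap w h tau x by move=> j; rewrite inE => /andP[_ /eqP].
have [u u_tau] := stable_descent_dir st Xx tau_x.
have near_X : \forall e \near 0^'+, X (x + e *: u).
  apply: cvg_within; apply: cvg_line; apply: open_nbhs_nbhs; split => //.
  exact: st.1.
have near_sign i : \forall e \near 0^'+,
    (i \in sigma -> Hpos w h i (x + e *: u)) /\
    (i \notin sigma -> Hneg w h i (x + e *: u)).
  have [i_sigma|i_sigma] := boolP (i \in sigma).
    near=> e; split => // _; rewrite /Hpos /= vdotDZ addrAC.
    near: e; apply: cvg_within.
    exact: cvgr_gt (cvg_line_scalar _) _ (pos_x i i_sigma).
  have [i_tau|i_tau] := boolP (i \in tau).
    near=> e; split => // _; rewrite /Hneg /= vdotDZ addrAC u_tau //.
    move: i_tau; rewrite inE i_sigma => /eqP ->.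
    rewrite add0r mulrN1 oppr_lt0; near: e; exact: nbhs_right_gt.
  have a_neg : vdot (w i) x - h i < 0.
    rewrite lt_neqAle leNgt; apply/andP; split; last exact/negP/npos_x.
    by apply: contraNneq i_tau => a0; rewrite inE i_sigma a0 eqxx.
  near=> e; split => // _; rewrite /Hneg /= vdotDZ addrAC.
  near: e; apply: cvg_within; exact: cvgr_lt (cvg_line_scalar _) _ a_neg.
have [e [Xe sign_e]] := filter_ex (filterI near_X (filter_forall _ near_sign)).
by exists (x + e *: u); split => //; split => i; have [] := sign_e i.
Unshelve. all: by end_near.
Qed.

Definition pos_support (x : 'rV[R]_d) : {set 'I_n} :=
  [set i | `[< Hpos w h i x >]]%SET.

Lemma pos_support_in_hcode X x : X x -> pos_support x \in hcode w h X.
Proof.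
move=> Xx; rewrite inE; apply/asboolP; exists x; split=> //.
by split=> i; rewrite inE => /asboolP.
Qed.

Lemma hnerve_face_sub_Sigma X (S : {set 'I_n + 'I_n}) x :
  (forall v, v \in S -> vset w h X v x) -> S \subset Sigma (pos_support x).
Proof.
move=> Sx; apply/fintype.subsetP => -[] i /Sx [xi _]; rewrite inE.
  by apply/orP; left; apply: imset_f; rewrite inE; apply/asboolP.
apply/orP; right; apply: imset_f; rewrite !inE; apply/asboolP => pos_xi.
by have := lt_trans xi pos_xi; rewrite ltxx.
Qed.

Lemma Sigma_in_hnerve X sigma :
  stable_arr w h X -> sigma \in hcode w h X -> Sigma sigma \in hnerve w h X.
Proof.
move=> st; rewrite inE => /asboolP [x /(hatom_perturb st)].
move=> [y [Xy [pos_y neg_y]]].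
rewrite inE; apply/asboolP; exists y; split=> // -[] i; rewrite inE.
  by case/orP => /imsetP [j j_sigma] // [->]; split=> //; apply: pos_y.
case/orP => /imsetP [j j_sigma] // [->]; split=> //.
by apply: neg_y; rewrite inE in j_sigma.
Qed.

Lemma hnerve_sub_closed X (S T : {set 'I_n + 'I_n}) :
  S \subset T -> T \in hnerve w h X -> S \in hnerve w h X.
Proof.
move=> /fintype.subsetP ST; rewrite inE => /asboolP [x [Xx Tx]].
by rewrite inE; apply/asboolP; exists x; split=> // v /ST; apply: Tx.
Qed.

End Arrangement.

Theorem lemma2p9 (R : realType) (d n : nat) (w : 'I_n -> 'rV[R]_d) (h : 'I_n -> R)
    (X : set 'rV[R]_d) :
  (forall i : 'I_n, w i <> 0) ->
  stable_arr w h X ->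
  polar_complex (hcode w h X) = hnerve w h X.
Proof.
move=> _ st; apply/setP => S; apply/idP/idP.
  rewrite inE => /existsP [sigma /andP [sigma_code S_sub]].
  exact: hnerve_sub_closed S_sub (Sigma_in_hnerve st sigma_code).
rewrite inE => /asboolP [x [Xx Sx]].
rewrite inE; apply/existsP; exists (pos_support w h x).
by rewrite pos_support_in_hcode // (hnerve_face_sub_Sigma Sx).
Qed.
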